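(* For every integer $n\ge 2$ and every integer $k\ge 3$, $\chi_i(S_{C_k}^n)=3$, where $C_k$ is the cycle on $k$ vertices.
   Context: For a graph $H$, an injective $k$-coloring is a map $f:V(H)\to\{1,\dots,k\}$ such that any two distinct vertices $u,w$ with $f(u)=f(w)$ have no common neighbor; $\chi_i(H)$ is the least such $k$. For a graph $G$ and positive integer $n$, the generalized Sierpiński graph $S_G^n$ has vertex set $V(G)^n$, and $(u_1,\dots,u_n)$, $(v_1,\dots,v_n)$ are adjacent if and only if there is $d\in\{1,\dots,n\}$ with $u_i=v_i$ for $i<d$, $u_dv_d\in E(G)$, and $u_i=v_d$, $v_i=u_d$ for all $i>d$. *)

From mathcomp Require Import all_boot.
Set Implicit Arguments. Unset Strict Implicit. Unset Printing Implicit Defensive.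

Definition injective_coloring (T : finType) (adj : rel T) (c : nat)
  (f : T -> 'I_c) : Prop :=
  forall u w : T, u != w -> f u = f w -> ~ (exists x : T, adj u x && adj w x).

Definition injective_colorable (T : finType) (adj : rel T) (c : nat) : Prop :=
  exists f : T -> 'I_c, injective_coloring adj f.

Definition injective_chromatic_number (T : finType) (adj : rel T) (m : nat) : Prop :=
  injective_colorable adj m /\ (forall c, injective_colorable adj c -> m <= c).

Definition cycle_adj (k : nat) : rel 'I_k :=
  fun i j => (j == (i.+1 %% k) :> nat) || (i == (j.+1 %% k) :> nat).

(* Generalized Sierpinski graph S_G^n with vertex set V(G)^n, coordinates
   indexed by 'I_n (coordinate d corresponds to d+1 in the paper). *)
Definition sierpinski_adj (V : finType) (adj : rel V) (n : nat) :
  rel {ffun 'I_n -> V} :=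
  fun u v => [exists d : 'I_n,
    [&& [forall i : 'I_n, (i < d) ==> (u i == v i)],
        adj (u d) (v d) &
        [forall i : 'I_n, (d < i) ==> ((u i == v d) && (v i == u d))]]].

Arguments cycle_adj k : clear implicits.
Arguments sierpinski_adj {V} adj n.

From mathcomp Require Import all_boot zify.

Set Implicit Arguments. Unset Strict Implicit. Unset Printing Implicit Defensive.

(* In S_G^n a vertex x has two kinds of neighbours: its final neighbours, obtained by
   moving the last letter of x along an edge of G, and at most one bridge neighbour.
   A colouring is therefore injective as soon as the final neighbours of every x get
   pairwise distinct colours, all different from the colour of the bridge neighbour.
   For C_3 the weighted letter sum modulo 3 does this: bridges preserve it, since the
   weights after any position add up to the weight of that position, while changing the
   last letter changes it.  For k >= 4 a colour depending only on the last two letters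
   works: a function of their difference modulo k when k >= 5, a table when k = 4.
   Conversely, for a path a - b - c in G the vertex a..ab has the three neighbours
   a..aa, a..ac and a..aba, which need three colours. *)

Lemma card_neighbours_le (T : finType) (r : rel T) (C : nat) (f : T -> 'I_C) (x : T) :
  injective_coloring r f -> #|[set u | r u x]| <= C.
Proof.
move=> col; rewrite -[C]card_ord; apply: (@leq_card_in _ _ f) => u w.
rewrite !inE => ux wx fuw; apply/eqP/negPn/negP => uw.
by apply: (col u w uw fuw); exists x; rewrite ux wx.
Qed.

Section SierpinskiGraph.

Variables (V : finType) (adj : rel V) (m : nat).
Hypotheses (adj_sym : symmetric adj) (adj_irr : irreflexive adj).

Local Notation word := {ffun 'I_m.+2 -> V}.
Local Notation sadj := (sierpinski_adj adj m.+2).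

Lemma neq_ord_max_lt (d : 'I_m.+2) : d != ord_max -> d < m.+1.
Proof. by rewrite -val_eqE /=; have := ltn_ord d; lia. Qed.

Lemma penult_neq_max : (inord m : 'I_m.+2) != ord_max.
Proof. by rewrite -val_eqE /= inordK //; lia. Qed.

Definition set_last (x : word) (c : V) : word :=
  [ffun i => if i == ord_max then c else x i].

Lemma set_last_id (x : word) : set_last x (x ord_max) = x.
Proof. by apply/ffunP => i; rewrite ffunE; case: eqP => [->|]. Qed.

(* The edges of S_G^n that do not just change the last letter: for an edge ab of G,
   u = w a b..b and x = w b a..a, the letters a and b sitting at position d. *)
Definition bridge_at (d : 'I_m.+2) (u x : word) : Prop :=
  [/\ d != ord_max, adj (u d) (x d),
      forall i : 'I_m.+2, i < d -> u i = x i &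
      forall i : 'I_m.+2, d < i -> u i = x d /\ x i = u d].

Lemma sierpinski_adjP (u x : word) : sadj u x ->
  (exists2 c, u = set_last x c & adj c (x ord_max)) \/ exists d, bridge_at d u x.
Proof.
case/existsP=> d /and3P[/forallP before adj_d /forallP after].
have [d_max|d_max] := eqVneq d ord_max; [left | right].
  subst d; exists (u ord_max) => //; apply/ffunP => i; rewrite ffunE.
  case: eqP => [->//|/eqP i_max]; apply/eqP/(implyP (before i)).
  exact: neq_ord_max_lt.
exists d; split=> // i lt_id; first exact/eqP/(implyP (before i)).
by have /andP[/eqP-> /eqP->] := implyP (after i) lt_id.
Qed.

(* The last letter of x is u d = w e, so a bridge at d < e would make w e adjacent to itself. *)
Lemma bridge_at_uniq d e (u w x : word) : bridge_at d u x -> bridge_at e w x -> u = w.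
Proof.
move=> [d_max adj_d u_lt u_gt] [e_max adj_e w_lt w_gt].
have xd := (u_gt ord_max (neq_ord_max_lt d_max)).2.
have xe := (w_gt ord_max (neq_ord_max_lt e_max)).2.
have de : d = e.
  apply/val_inj; case: (ltngtP d e) => [lt_de|lt_ed|//].
  - by move: adj_e; rewrite (u_gt _ lt_de).2 -xd xe adj_irr.
  - by move: adj_d; rewrite (w_gt _ lt_ed).2 -xe xd adj_irr.
subst e; apply/ffunP => i; case: (ltngtP i d) => [lt_id|lt_di|/val_inj->].
- by rewrite u_lt // w_lt.
- by rewrite (u_gt _ lt_di).1 (w_gt _ lt_di).1.
- by rewrite -xd xe.
Qed.

Lemma sierpinski_adj_set_last (x : word) c : adj c (x ord_max) -> sadj (set_last x c) x.
Proof.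
move=> adj_c; apply/existsP; exists ord_max; rewrite !ffunE eqxx adj_c /=.
apply/andP; split; apply/forallP => i; apply/implyP => lt_i; last first.
  by have := ltn_ord i; rewrite /= in lt_i; lia.
by rewrite ffunE ifN // -val_eqE /= neq_ltn lt_i.
Qed.

Lemma injective_coloring_sierpinski (C : nat) (f : word -> 'I_C) :
  (forall (x : word) (c c' : V), c != c' -> adj (x ord_max) c -> adj (x ord_max) c' ->
     f (set_last x c) != f (set_last x c')) ->
  (forall d (u x : word) c, bridge_at d u x -> adj (x ord_max) c -> f u != f (set_last x c)) ->
  injective_coloring sadj f.
Proof.
move=> final bridge u w uw fuw [x /andP[/sierpinski_adjP ux /sierpinski_adjP wx]].
case: ux wx => [[c ? xc]|[d bu]] [[c' ? xc']|[e bw]]; subst.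
- have cc' : c != c' by apply: contraNneq uw => ->.
  by move: (final x c c' cc'); rewrite !(adj_sym (x ord_max)) xc xc' fuw eqxx => /(_ isT isT).
- by move: (bridge e w x c bw); rewrite adj_sym xc fuw eqxx => /(_ isT).
- by move: (bridge d u x c' bu); rewrite adj_sym xc' fuw eqxx => /(_ isT).
- by move: uw; rewrite (bridge_at_uniq bu bw) eqxx.
Qed.

Lemma sierpinski_three_neighbours a b c : adj a b -> adj c b -> a != c ->
  exists x : word, 3 <= #|[set u | sadj u x]|.
Proof.
move=> ab cb ac; pose x : word := [ffun i => if i == ord_max then b else a].
pose v : word := [ffun i => if i == inord m then b else a].
have x_last : x ord_max = b by rewrite ffunE eqxx.
have pen := penult_neq_max.
have ba : b != a by apply: contraTneq ab => ->; rewrite adj_irr.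
have vx : sadj v x.
  apply/existsP; exists (inord m); rewrite !ffunE eqxx (negbTE pen) adj_sym ab.
  apply/and3P; split=> //; apply/forallP => i; apply/implyP; rewrite inordK // => lt_i.
    rewrite !ffunE !ifN // -val_eqE /= ?inordK //; have := ltn_ord i; lia.
  have -> : i = ord_max by apply/val_inj; have := ltn_ord i; rewrite /=; lia.
  by rewrite !ffunE [ord_max == _]eq_sym (negbTE pen) !eqxx.
have v_pen : v (inord m) = b by rewrite ffunE eqxx.
have pen_set_last y : set_last x y (inord m) = a by rewrite !ffunE !(negbTE pen).
have set_last_neq_v y : set_last x y != v.
  by apply: contra_neq ba => /(congr1 (fun w : word => w (inord m))); rewrite v_pen pen_set_last.
have set_last_neq : set_last x a != set_last x c.
  by apply: contra_neq ac => /(congr1 (fun w : word => w ord_max)); rewrite !ffunE eqxx.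
exists x; rewrite -[3]/(size [:: set_last x a; set_last x c; v]) -(card_uniqP _); last first.
  by rewrite /= !inE !negb_or set_last_neq !set_last_neq_v.
apply: subset_leq_card; apply/subsetP => y; rewrite !inE.
by case/or3P => /eqP->; rewrite ?vx // sierpinski_adj_set_last ?x_last.
Qed.

Lemma sierpinski_injective_colorable_ge3 a b c (C : nat) : adj a b -> adj c b -> a != c ->
  injective_colorable sadj C -> 3 <= C.
Proof.
move=> ab cb ac [f col]; have [x le3] := sierpinski_three_neighbours ab cb ac.
exact: leq_trans le3 (card_neighbours_le x col).
Qed.

Section LastTwoLetters.

Variables (C : nat) (g : V -> V -> 'I_C).

Definition last_two_coloring (u : word) : 'I_C := g (u (inord m)) (u ord_max).

Hypothesis g_final : forall p a c c', c != c' -> adj a c -> adj a c' -> g p c != g p c'.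
Hypothesis g_bridge_last : forall a b c, adj a b -> adj a c -> g a b != g b c.
Hypothesis g_bridge_inner : forall a b c, adj a b -> adj a c -> g b b != g a c.

Lemma injective_coloring_last_two : injective_coloring sadj last_two_coloring.
Proof.
apply: injective_coloring_sierpinski => [x c c' cc' xc xc'|d u x c [d_max ud _ u_gt] xc].
  by rewrite /last_two_coloring !ffunE (negbTE penult_neq_max) eqxx (g_final _ cc' xc xc').
have [u_last x_last] := u_gt ord_max (neq_ord_max_lt d_max).
rewrite /last_two_coloring !ffunE (negbTE penult_neq_max) eqxx u_last.
rewrite x_last in xc; have := neq_ord_max_lt d_max; rewrite ltnS leq_eqVlt.
case/orP => [/eqP d_pen | lt_dm]; last first.
  have lt_d_pen : d < (inord m : 'I_m.+2) by rewrite inordK.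
  by have [-> ->] := u_gt _ lt_d_pen; apply: g_bridge_inner.
have -> : inord m = d by apply/val_inj; rewrite /= inordK -?d_pen.
exact: g_bridge_last ud xc.
Qed.

End LastTwoLetters.

End SierpinskiGraph.

Section WeightedSum.

Variables (p m : nat) (adj : rel 'I_p.+1).
Hypotheses (adj_sym : symmetric adj) (adj_irr : irreflexive adj).

Local Notation word := {ffun 'I_m.+2 -> 'I_p.+1}.

(* Weights 2^m, ..., 2, 1, 1: the weights after any position d add up to the weight of d. *)
Definition position_weight (i : nat) : nat := if i == m.+1 then 1 else 2 ^ (m - i).

Lemma sum_position_weight_gt (d : nat) : d <= m ->
  \sum_(i < m.+2 | d < i) position_weight i = position_weight d.
Proof.
have weight_le i : i <= m -> position_weight i = 2 ^ (m - i).
  by move=> le_im; rewrite /position_weight ifN //; lia.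
have tail j : j <= m -> \sum_((m - j).+1 <= i < m.+2) position_weight i = 2 ^ j.
  elim: j => [|j IH] le_jm.
    by rewrite subn0 big_nat1 /position_weight eqxx.
  have le_jm' : j <= m by lia.
  rewrite (_ : (m - j.+1).+1 = m - j); last by lia.
  rewrite big_ltn; last by lia.
  by rewrite IH // weight_le ?leq_subr // subKn // expnS mul2n -addnn.
move=> le_dm; rewrite weight_le // -tail ?leq_subr // subKn //.
by rewrite big_geq_mkord.
Qed.

Definition weighted_sum (u : word) : nat := \sum_(i < m.+2) position_weight i * u i.

Lemma weighted_sum_set_last (x : word) c :
  weighted_sum (set_last x c) = c + \sum_(i < m.+2 | i != ord_max) position_weight i * x i.
Proof.
rewrite /weighted_sum (bigD1 ord_max) //= ffunE eqxx /position_weight eqxx mul1n.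
by congr (_ + _); apply: eq_bigr => i i_max; rewrite ffunE (negbTE i_max).
Qed.

Lemma weighted_sum_split (u : word) (d : 'I_m.+2) (e : nat) : d != ord_max ->
  (forall i : 'I_m.+2, d < i -> u i = e :> nat) ->
  weighted_sum u =
    \sum_(i < m.+2 | i < d) position_weight i * u i + position_weight d * (u d + e).
Proof.
move=> d_max u_gt; rewrite /weighted_sum (bigID (fun i : 'I_m.+2 => i < d)) /= mulnDr.
have -> : position_weight d * e = \sum_(i < m.+2 | d < i) position_weight i * e.
  by rewrite -big_distrl sum_position_weight_gt //; have := neq_ord_max_lt d_max; lia.
rewrite [X in _ + X](bigD1 d) ?ltnn //= !addnA; congr (_ + _).
apply: eq_big => [i|i]; first by rewrite -val_eqE /=; lia.
by rewrite -val_eqE /= => lt_di; rewrite u_gt //; lia.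
Qed.

Lemma weighted_sum_bridge d (u x : word) : bridge_at adj d u x -> weighted_sum u = weighted_sum x.
Proof.
move=> [d_max _ u_lt u_gt].
rewrite (weighted_sum_split d_max (e := x d)) => [|i /u_gt[->]]//.
rewrite (weighted_sum_split d_max (e := u d)) => [|i /u_gt[_ ->]]//.
by rewrite [x d + _]addnC; congr (_ + _); apply: eq_bigr => i /u_lt->.
Qed.

Definition weighted_sum_coloring (u : word) : 'I_p.+1 := inord (weighted_sum u %% p.+1).

Lemma injective_coloring_weighted_sum :
  injective_coloring (sierpinski_adj adj m.+2) weighted_sum_coloring.
Proof.
have inord_mod_inj a b : inord (a %% p.+1) = inord (b %% p.+1) :> 'I_p.+1 -> a == b %[mod p.+1].
  by move/(congr1 val)/eqP; rewrite /= !inordK ?ltn_pmod.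
rewrite /weighted_sum_coloring; apply: injective_coloring_sierpinski => //.
  move=> x c c' cc' _ _; apply/contra_neq: cc' => /inord_mod_inj.
  by rewrite !weighted_sum_set_last eqn_modDr !modn_small // => /eqP/val_inj.
move=> d u x c /weighted_sum_bridge bridge_sum xc; apply/negP.
rewrite bridge_sum -{1}(set_last_id x) => /eqP/inord_mod_inj.
rewrite !weighted_sum_set_last eqn_modDr !modn_small // => /eqP/val_inj last_c.
by rewrite last_c adj_irr in xc.
Qed.

End WeightedSum.

Definition cycle_succ (k a : nat) : nat := if a.+1 == k then 0 else a.+1.

Definition cycle_adj_nat (k a c : nat) : bool := (c == cycle_succ k a) || (a == cycle_succ k c).

Lemma cycle_adjE k (a c : 'I_k) : cycle_adj k a c = cycle_adj_nat k a c.
Proof.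
have succ_mod x : x < k -> x.+1 %% k = cycle_succ k x.
  rewrite /cycle_succ; case: eqP => [->|]; first by rewrite modnn.
  by move=> ne lt_xk; rewrite modn_small //; lia.
by rewrite /cycle_adj /cycle_adj_nat !succ_mod.
Qed.

Lemma cycle_adj_sym k : symmetric (cycle_adj k).
Proof. by move=> a c; rewrite /cycle_adj orbC. Qed.

Lemma cycle_adj_irr k : 1 < k -> irreflexive (cycle_adj k).
Proof.
move=> lt1k a; rewrite cycle_adjE /cycle_adj_nat /cycle_succ orbb.
by have := ltn_ord a; case: ifP; lia.
Qed.

(* The hypotheses of [injective_coloring_last_two] for C_k, on the vertex codes
   0, ..., k-1, so that for k = 4 they can be checked by computation. *)
Definition last_two_good (k : nat) (g : nat -> nat -> nat) : Prop :=
  [/\ forall a b, a < k -> b < k -> g a b < 3,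
      forall p a c c', p < k -> a < k -> c < k -> c' < k -> c != c' ->
        cycle_adj_nat k a c -> cycle_adj_nat k a c' -> g p c != g p c',
      forall a b c, a < k -> b < k -> c < k ->
        cycle_adj_nat k a b -> cycle_adj_nat k a c -> g a b != g b c &
      forall a b c, a < k -> b < k -> c < k ->
        cycle_adj_nat k a b -> cycle_adj_nat k a c -> g b b != g a c].

Lemma injective_coloring_cycle_last_two m k g : 1 < k -> last_two_good k g ->
  injective_coloring (sierpinski_adj (cycle_adj k) m.+2)
    (last_two_coloring (fun a b : 'I_k => inord (g a b) : 'I_3)).
Proof.
move=> lt1k [g_lt3 g_final g_bridge_last g_bridge_inner].
have inord_neq (a b a' b' : 'I_k) : g a b != g a' b' -> inord (g a b) != inord (g a' b') :> 'I_3.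
  by apply: contra_neq => /(congr1 val); rewrite /= !inordK ?g_lt3.
apply: (injective_coloring_last_two (@cycle_adj_sym k) (cycle_adj_irr lt1k)).
- move=> p a c c' cc'; rewrite !cycle_adjE => ac ac'; apply: inord_neq.
  exact: g_final (ltn_ord p) (ltn_ord a) (ltn_ord c) (ltn_ord c') cc' ac ac'.
- move=> a b c; rewrite !cycle_adjE => ab ac; apply: inord_neq.
  exact: g_bridge_last (ltn_ord a) (ltn_ord b) (ltn_ord c) ab ac.
- move=> a b c; rewrite !cycle_adjE => ab ac; apply: inord_neq.
  exact: g_bridge_inner (ltn_ord a) (ltn_ord b) (ltn_ord c) ab ac.
Qed.

Lemma cycle_succ_lt k a : a < k -> cycle_succ k a < k.
Proof. by rewrite /cycle_succ; case: ifP; lia. Qed.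

Lemma cycle_succ_inj k a c : a < k -> c < k -> cycle_succ k a = cycle_succ k c -> a = c.
Proof. by rewrite /cycle_succ; do ![case: ifP]; lia. Qed.

Definition cycle_gap (k a b : nat) : nat := if a <= b then b - a else b + k - a.

Lemma cycle_gap_lt k a b : a < k -> b < k -> cycle_gap k a b < k.
Proof. by rewrite /cycle_gap; case: ifP; lia. Qed.

Lemma cycle_gapnn k a : cycle_gap k a a = 0.
Proof. by rewrite /cycle_gap leqnn subnn. Qed.

Lemma cycle_gap_succr k p a : p < k -> a < k ->
  cycle_gap k p (cycle_succ k a) = cycle_succ k (cycle_gap k p a).
Proof. by rewrite /cycle_gap /cycle_succ; do ![case: ifP]; lia. Qed.

Lemma cycle_gap_succ k a : 1 < k -> a < k -> cycle_gap k a (cycle_succ k a) = 1.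
Proof. by rewrite /cycle_gap /cycle_succ; do ![case: ifP]; lia. Qed.

Lemma cycle_gap_succ2 k a : 2 < k -> a < k ->
  cycle_gap k a (cycle_succ k (cycle_succ k a)) = 2.
Proof. by rewrite /cycle_gap /cycle_succ; do ![case: ifP]; lia. Qed.

Lemma cycle_gap_pred k a : a < k -> cycle_gap k (cycle_succ k a) a = k.-1.
Proof. by rewrite /cycle_gap /cycle_succ; do ![case: ifP]; lia. Qed.

Lemma cycle_gap_pred2 k a : a < k -> cycle_gap k (cycle_succ k (cycle_succ k a)) a = k - 2.
Proof. by rewrite /cycle_gap /cycle_succ; do ![case: ifP]; lia. Qed.

Section GapColoring.

Variables (k : nat) (h : nat -> nat).
Hypothesis lt2k : 2 < k.
Hypothesis h_lt3 : forall i, i < k -> h i < 3.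
Hypothesis h_skip2 : forall i, i < k -> h (cycle_succ k (cycle_succ k i)) != h i.
Hypotheses (h01 : h 0 != h 1) (h0_last : h 0 != h k.-1).
Hypotheses (h1_km2 : h 1 != h (k - 2)) (h_last2 : h k.-1 != h 2).

Lemma gap_last_two_good : last_two_good k (fun a b => h (cycle_gap k a b)).
Proof.
have lt1k : 1 < k by lia.
split=> [a b lt_ak lt_bk|p a c c' lt_pk lt_ak lt_ck lt_c'k cc'|a b c lt_ak lt_bk lt_ck|a b c lt_ak lt_bk lt_ck].
- exact/h_lt3/cycle_gap_lt.
- rewrite /cycle_adj_nat => /orP[/eqP c_succ | /eqP a_succ] /orP[/eqP c'_succ | /eqP a_succ'].
  + by rewrite c_succ c'_succ eqxx in cc'.
  + rewrite c_succ a_succ' !cycle_gap_succr ?cycle_succ_lt //.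
    exact/h_skip2/cycle_gap_lt.
  + rewrite c'_succ a_succ !cycle_gap_succr ?cycle_succ_lt // eq_sym.
    exact/h_skip2/cycle_gap_lt.
  + suff eq_cc' : c = c' by rewrite eq_cc' eqxx in cc'.
    by apply: (cycle_succ_inj lt_ck lt_c'k); rewrite -a_succ.
- rewrite /cycle_adj_nat => /orP[/eqP b_succ | /eqP a_succ] /orP[/eqP c_succ | /eqP a_succ'].
  + by rewrite b_succ -c_succ cycle_gapnn c_succ cycle_gap_succ // eq_sym.
  + by rewrite b_succ cycle_gap_succ // a_succ' cycle_gap_pred2.
  + by rewrite c_succ a_succ cycle_gap_pred // cycle_gap_succ2.
  + have -> : c = b by apply: (cycle_succ_inj lt_ck lt_bk); rewrite -a_succ.
    by rewrite a_succ cycle_gap_pred // cycle_gapnn eq_sym.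
- rewrite cycle_gapnn /cycle_adj_nat => _ /orP[/eqP-> | /eqP->].
    by rewrite cycle_gap_succ.
  by rewrite cycle_gap_pred.
Qed.

End GapColoring.

(* Gaps two apart get different colours: the pattern is 0 | 1 1 0 0 1 1 0 0 ... | 2 2. *)
Definition gap_colour (k d : nat) : nat :=
  if d == 0 then 0 else if k - 2 <= d then 2 else if d.-1 %% 4 < 2 then 1 else 0.

Lemma gap_colour_last_two_good k : 4 < k ->
  last_two_good k (fun a b => gap_colour k (cycle_gap k a b)).
Proof.
move=> lt4k; apply: gap_last_two_good => [|i _|i lt_ik||||]; first lia;
  by rewrite /gap_colour ?/cycle_succ /=; do ![case: ifP]; lia.
Qed.

(* On C_4 no colour depending only on the gap works: the gaps 0, 1, 2, 3 would need
   pairwise distinct colours. *)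
Definition c4_colour (a b : nat) : nat :=
  nth 0 (nth [::] [:: [:: 0; 1; 2; 2]; [:: 1; 0; 2; 2]; [:: 1; 1; 0; 2]; [:: 1; 1; 2; 0]] a) b.

Lemma c4_colour_last_two_good : last_two_good 4 c4_colour.
Proof.
pose for4 (P : pred nat) := all P (iota 0 4).
have all4 (P : pred nat) : for4 P -> forall x, x < 4 -> P x.
  by move=> /allP all_P x lt_x4; apply: all_P; rewrite mem_iota.
have bounded : for4 (fun a => for4 (fun b => c4_colour a b < 3)) by [].
have final : for4 (fun p => for4 (fun a => for4 (fun c => for4 (fun c' =>
    (c != c') ==> cycle_adj_nat 4 a c ==> cycle_adj_nat 4 a c' ==> (c4_colour p c != c4_colour p c'))))).
  by [].
have bridge_last : for4 (fun a => for4 (fun b => for4 (fun c =>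
    cycle_adj_nat 4 a b ==> cycle_adj_nat 4 a c ==> (c4_colour a b != c4_colour b c)))).
  by [].
have bridge_inner : for4 (fun a => for4 (fun b => for4 (fun c =>
    cycle_adj_nat 4 a b ==> cycle_adj_nat 4 a c ==> (c4_colour b b != c4_colour a c)))).
  by [].
split.
- by move=> a b /(all4 _ bounded) /all4; apply.
- move=> p a c c' /(all4 _ final) /all4 /[apply] /all4 /[apply] /all4 /[apply].
  by move=> /implyP /[apply] /implyP /[apply] /implyP.
- move=> a b c /(all4 _ bridge_last) /all4 /[apply] /all4 /[apply].
  by move=> /implyP /[apply] /implyP.
- move=> a b c /(all4 _ bridge_inner) /all4 /[apply] /all4 /[apply].
  by move=> /implyP /[apply] /implyP.
Qed.

Lemma cycle_sierpinski_injective_colorable_ge3 m k C : 2 < k ->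
  injective_colorable (sierpinski_adj (cycle_adj k) m.+2) C -> 3 <= C.
Proof.
move=> lt2k; have lt1k : 1 < k by lia.
have lt0k : 0 < k by lia.
apply: (sierpinski_injective_colorable_ge3 (@cycle_adj_sym k) (cycle_adj_irr lt1k)
         (a := Ordinal lt0k) (b := Ordinal lt1k) (c := Ordinal lt2k)) => //.
- by rewrite /cycle_adj /= modn_small ?eqxx.
- by rewrite /cycle_adj /= [2 %% k]modn_small ?eqxx ?orbT.
Qed.

Lemma cycle_sierpinski_injective_3colorable m k : 2 < k ->
  injective_colorable (sierpinski_adj (cycle_adj k) m.+2) 3.
Proof.
move=> lt2k; case: (ltngtP k 4) => [lt_k4|lt4k|->].
- have -> : k = 3 by lia.
  eexists; apply: injective_coloring_weighted_sum; [exact: cycle_adj_sym | exact: cycle_adj_irr].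
- eexists; apply: injective_coloring_cycle_last_two (gap_colour_last_two_good lt4k); lia.
- by eexists; apply: injective_coloring_cycle_last_two c4_colour_last_two_good.
Qed.

Theorem mainTheorem3 (n k : nat) (hn : 2 <= n) (hk : 3 <= k) :
  injective_chromatic_number (sierpinski_adj (cycle_adj k) n) 3.
Proof.
case: n hn => [|[|m]] // _; split.
  exact: cycle_sierpinski_injective_3colorable.
by move=> C; apply: cycle_sierpinski_injective_colorable_ge3.
Qed.
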